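(* Let $P, A, B, C$ be points in the Euclidean plane, let $r>0$ and let $Z=\{Q:|PQ|\le r\}$. For a point $Q\notin\{A,B,C\}$, consider the three angles around $Q$ formed by consecutive rays among $QA,QB,QC$ in counterclockwise order (these three angles sum to $2\pi$). Let $P^*\in Z$ be a solution of the Max-Min-Angle problem, i.e. a point of $Z$ maximizing, over $Q\in Z$, the smallest of the angles $\angle AQB,\angle BQC,\angle CQA$ (non-reflex angles in $[0,\pi]$). Suppose that at $P^*$ there are exactly two smallest angles, i.e. two of the three consecutive angles around $P^*$ are equal and strictly smaller than the third. Then $P^*$ lies on the boundary circle $\{Q:|PQ|=r\}$ of $Z$.
   Context: Context: $P$ is the position of a degree-three vertex of a graph drawn with straight-line edges, $A,B,C$ the positions of its neighbours, and $r$ the maximum allowed displacement. *)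

From Stdlib Require Import Reals.
Open Scope R_scope.

Definition pt := (R * R)%type.

Definition pdist (X Y : pt) : R :=
  sqrt ((fst X - fst Y) ^ 2 + (snd X - snd Y) ^ 2).

(* Non-reflex angle XQY in [0, PI] (requires X <> Q, Y <> Q). *)
Definition angle (X Q Y : pt) : R :=
  let ux := fst X - fst Q in let uy := snd X - snd Q in
  let vx := fst Y - fst Q in let vy := snd Y - snd Q in
  acos ((ux * vx + uy * vy) / (pdist X Q * pdist Y Q)).

(* Counterclockwise angle in [0, 2 PI) from ray QX to ray QY. *)
Definition ccw_angle (Q X Y : pt) : R :=
  let ux := fst X - fst Q in let uy := snd X - snd Q in
  let vx := fst Y - fst Q in let vy := snd Y - snd Q in
  if Rle_dec 0 (ux * vy - uy * vx) then angle X Q Y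
  else 2 * PI - angle X Q Y.

(* If, going
   counterclockwise from QA, ray QB is met no later than QC, the cyclic
   order is A, B, C; otherwise it is A, C, B. *)
Definition consecutive_angles (Q A B C : pt) : R * R * R :=
  if Rle_dec (ccw_angle Q A B) (ccw_angle Q A C)
  then (ccw_angle Q A B, ccw_angle Q B C, 2 * PI - ccw_angle Q A C)
  else (ccw_angle Q A C, ccw_angle Q C B, 2 * PI - ccw_angle Q A B).

Definition exactly_two_smallest (t : R * R * R) : Prop :=
  let '(x, y, z) := t in
  (x = y /\ x < z) \/ (y = z /\ y < x) \/ (z = x /\ z < y).

Definition min_angle (Q A B C : pt) : R :=
  Rmin (angle A Q B) (Rmin (angle B Q C) (angle C Q A)).

Definition not_ABC (Q A B C : pt) : Prop := Q <> A /\ Q <> B /\ Q <> C.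

Definition max_min_angle_solution (P A B C : pt) (r : R) (Pstar : pt) : Prop :=
  pdist P Pstar <= r /\ not_ABC Pstar A B C /\
  forall Q : pt, pdist P Q <= r -> not_ABC Q A B C ->
    min_angle Q A B C <= min_angle Pstar A B C.

From Stdlib Require Import Reals Lra Psatz.
Open Scope R_scope.

(* If P* were interior to the disk, a small move of P* would enlarge all three angles
   AQB, BQC, CQA at once, contradicting maximality.  We compare cosines: the smallest
   angle is acos of the largest cosine K.  If K = 1, two rays coincide and a step
   perpendicular to them separates every pair of coinciding rays.  If one angle exceeds
   the minimum, a step toward the point shared by the two other angles opens both of
   them (exterior angle theorem) while the first stays large by continuity.  Otherwise
   the three angles are equal, hence so are the three consecutive angles around P*,
   which is excluded by the hypothesis of exactly two smallest angles. *)

Definition inner (X Q Y : pt) : R :=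
  (fst X - fst Q) * (fst Y - fst Q) + (snd X - snd Q) * (snd Y - snd Q).

Definition cross (X Q Y : pt) : R :=
  (fst X - fst Q) * (snd Y - snd Q) - (snd X - snd Q) * (fst Y - fst Q).

Definition dist2 (X Q : pt) : R := (fst X - fst Q) ^ 2 + (snd X - snd Q) ^ 2.

Definition cosine (X Q Y : pt) : R := inner X Q Y / (pdist X Q * pdist Y Q).

Lemma angle_acos_cosine X Q Y : angle X Q Y = acos (cosine X Q Y).
Proof. reflexivity. Qed.

Lemma cosine_sym X Q Y : cosine X Q Y = cosine Y Q X.
Proof. unfold cosine, inner. f_equal; ring. Qed.

Lemma angle_sym X Q Y : angle X Q Y = angle Y Q X.
Proof. now rewrite !angle_acos_cosine, cosine_sym. Qed.

Lemma cross_anti X Q Y : cross X Q Y = - cross Y Q X.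
Proof. unfold cross; ring. Qed.

Lemma dist2_pos X Q : X <> Q -> 0 < dist2 X Q.
Proof.
  intros HXQ. destruct X as [x1 x2], Q as [q1 q2]; unfold dist2; simpl.
  destruct (Req_dec x1 q1) as [->|h1]; [destruct (Req_dec x2 q2) as [->|h2]|].
  - congruence.
  - assert (0 < (x2 - q2)²) by (apply Rsqr_pos_lt; intro; apply h2; lra).
    unfold Rsqr in *; nra.
  - assert (0 < (x1 - q1)²) by (apply Rsqr_pos_lt; intro; apply h1; lra).
    pose proof (pow2_ge_0 (x2 - q2)). unfold Rsqr in *; nra.
Qed.

Lemma pdist_pos X Q : X <> Q -> 0 < pdist X Q.
Proof. intros HXQ. apply sqrt_lt_R0, dist2_pos, HXQ. Qed.

Lemma pdist_sqr X Q : pdist X Q ^ 2 = dist2 X Q.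
Proof.
  unfold pdist. rewrite <- Rsqr_pow2, Rsqr_sqrt; [reflexivity|].
  pose proof (pow2_ge_0 (fst X - fst Q)); pose proof (pow2_ge_0 (snd X - snd Q)); lra.
Qed.

Lemma lagrange_identity X Q Y :
  inner X Q Y ^ 2 + cross X Q Y ^ 2 = dist2 X Q * dist2 Y Q.
Proof. unfold inner, cross, dist2. ring. Qed.

Definition dir_cos (a b : R) : R := a / sqrt (a ^ 2 + b ^ 2).

Lemma dir_cos_sq a b : 0 < a ^ 2 + b ^ 2 -> 1 - dir_cos a b ^ 2 = b ^ 2 / (a ^ 2 + b ^ 2).
Proof.
  intros hpos. unfold dir_cos.
  assert (hs : sqrt (a ^ 2 + b ^ 2) ^ 2 = a ^ 2 + b ^ 2)
    by (rewrite <- Rsqr_pow2; apply Rsqr_sqrt; lra).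
  pose proof (sqrt_lt_R0 _ hpos).
  set (s := sqrt (a ^ 2 + b ^ 2)) in *. rewrite <- hs.
  replace (b ^ 2) with (s ^ 2 - a ^ 2) by lra. field. lra.
Qed.

Lemma dir_cos_bound a b : 0 < a ^ 2 + b ^ 2 -> -1 <= dir_cos a b <= 1.
Proof.
  intros hpos. pose proof (dir_cos_sq a b hpos) as hsq.
  assert (0 <= b ^ 2 / (a ^ 2 + b ^ 2))
    by (apply Rmult_le_pos; [apply pow2_ge_0 | left; apply Rinv_0_lt_compat; lra]).
  nra.
Qed.

Lemma dir_cos_strict_bound a b : 0 < a ^ 2 + b ^ 2 -> (-1 < dir_cos a b < 1 <-> b <> 0).
Proof.
  intros hpos. pose proof (dir_cos_sq a b hpos) as hsq. split.
  - intros hb ->. rewrite pow_i, Rdiv_0_l in hsq by lia. nra.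
  - intros hb. assert (0 < b ^ 2 / (a ^ 2 + b ^ 2)).
    { apply Rdiv_lt_0_compat; [|lra]. pose proof (Rsqr_pos_lt b hb).
      rewrite Rsqr_pow2 in *; lra. }
    nra.
Qed.

Lemma dir_cos_scale l a b : 0 < l -> dir_cos (l * a) (l * b) = dir_cos a b.
Proof.
  intros hl. unfold dir_cos.
  replace ((l * a) ^ 2 + (l * b) ^ 2) with (l ^ 2 * (a ^ 2 + b ^ 2)) by ring.
  rewrite sqrt_mult, sqrt_pow2 by (pose proof (pow2_ge_0 a); pose proof (pow2_ge_0 b); nra).
  destruct (Req_dec (sqrt (a ^ 2 + b ^ 2)) 0) as [h0|h0].
  - rewrite h0, Rmult_0_r, !Rdiv_0_r. reflexivity.
  - field. lra.
Qed.

Lemma dir_cos_opp a b : dir_cos (- a) b = - dir_cos a b.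
Proof. unfold dir_cos. replace ((- a) ^ 2) with (a ^ 2) by ring. apply Rdiv_opp_l. Qed.

Lemma dir_cos_nonneg a b : 0 < a ^ 2 + b ^ 2 -> 0 <= a -> 0 <= dir_cos a b.
Proof.
  intros hpos ha. unfold dir_cos, Rdiv.
  apply Rmult_le_pos; [lra | left; apply Rinv_0_lt_compat, sqrt_lt_R0, hpos].
Qed.

Lemma dir_cos_pos a b : 0 < a ^ 2 + b ^ 2 -> 0 < a -> 0 < dir_cos a b.
Proof. intros hpos ha. apply Rdiv_lt_0_compat; [exact ha | apply sqrt_lt_R0, hpos]. Qed.

Lemma dir_cos_increasing a a' b : b <> 0 -> a < a' -> dir_cos a b < dir_cos a' b.
Proof.
  intros hb haa.
  assert (hpos : forall x, 0 < x ^ 2 + b ^ 2).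
  { intros x. pose proof (pow2_ge_0 x). pose proof (Rsqr_pos_lt b hb).
    rewrite Rsqr_pow2 in *. lra. }
  assert (hsq : forall x y, x ^ 2 < y ^ 2 -> dir_cos x b ^ 2 < dir_cos y b ^ 2).
  { intros x y hxy.
    enough (b ^ 2 / (y ^ 2 + b ^ 2) < b ^ 2 / (x ^ 2 + b ^ 2))
      by (pose proof (dir_cos_sq x b (hpos x)); pose proof (dir_cos_sq y b (hpos y)); lra).
    apply Rmult_lt_compat_l; [specialize (hpos 0); simpl in hpos; lra|].
    apply Rinv_lt_contravar; [apply Rmult_lt_0_compat; apply hpos | lra]. }
  destruct (Rlt_le_dec a 0) as [ha|ha]; [destruct (Rlt_le_dec 0 a') as [ha'|ha']|].
  - pose proof (dir_cos_pos (- a) b (hpos _) ltac:(lra)).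
    pose proof (dir_cos_pos a' b (hpos a') ha'). rewrite dir_cos_opp in *. lra.
  - pose proof (dir_cos_pos (- a) b (hpos _) ltac:(lra)).
    pose proof (dir_cos_nonneg (- a') b (hpos _) ltac:(lra)).
    assert (dir_cos (- a') b ^ 2 < dir_cos (- a) b ^ 2) by (apply hsq; nra).
    rewrite !dir_cos_opp in *. nra.
  - pose proof (dir_cos_nonneg a b (hpos a) ha).
    pose proof (dir_cos_pos a' b (hpos a') ltac:(lra)).
    assert (dir_cos a b ^ 2 < dir_cos a' b ^ 2) by (apply hsq; nra). nra.
Qed.

Lemma cosine_dir_cos X Q Y : cosine X Q Y = dir_cos (inner X Q Y) (cross X Q Y).
Proof.
  unfold cosine, dir_cos, pdist. rewrite <- sqrt_mult.
  - fold (dist2 X Q) (dist2 Y Q). now rewrite lagrange_identity.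
  - pose proof (pow2_ge_0 (fst X - fst Q)); pose proof (pow2_ge_0 (snd X - snd Q)); lra.
  - pose proof (pow2_ge_0 (fst Y - fst Q)); pose proof (pow2_ge_0 (snd Y - snd Q)); lra.
Qed.

Lemma inner_cross_pos X Q Y :
  X <> Q -> Y <> Q -> 0 < inner X Q Y ^ 2 + cross X Q Y ^ 2.
Proof.
  intros HX HY. rewrite lagrange_identity.
  apply Rmult_lt_0_compat; apply dist2_pos; assumption.
Qed.

Lemma cosine_bound X Q Y : X <> Q -> Y <> Q -> -1 <= cosine X Q Y <= 1.
Proof.
  intros HX HY. rewrite cosine_dir_cos. apply dir_cos_bound, inner_cross_pos; assumption.
Qed.

Lemma cosine_strict_bound X Q Y :
  X <> Q -> Y <> Q -> (-1 < cosine X Q Y < 1 <-> cross X Q Y <> 0).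
Proof.
  intros HX HY. rewrite cosine_dir_cos.
  apply dir_cos_strict_bound, inner_cross_pos; assumption.
Qed.

Lemma acos_decreasing x y : -1 <= x -> x < y -> y <= 1 -> acos y < acos x.
Proof.
  intros hx hxy hy. destruct (acos_bound x), (acos_bound y).
  destruct (Rlt_le_dec (acos y) (acos x)) as [h|h]; [exact h|].
  assert (hcos : cos (acos y) <= cos (acos x)).
  { destruct (Rle_lt_or_eq_dec _ _ h) as [h'|h']; [|right; f_equal; symmetry; exact h'].
    left. apply cos_decreasing_1; lra. }
  rewrite !cos_acos in hcos by lra. lra.
Qed.

Lemma acos_Rmax x y :
  -1 <= x <= 1 -> -1 <= y <= 1 -> acos (Rmax x y) = Rmin (acos x) (acos y).
Proof.
  intros hx hy.
  assert (hle : forall u v, -1 <= u -> u <= v -> v <= 1 -> acos v <= acos u).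
  { intros u v hu huv hv. destruct (Rle_lt_or_eq_dec _ _ huv) as [h|h].
    - left. apply acos_decreasing; assumption.
    - right. f_equal. symmetry. exact h. }
  apply Rmax_case_strong; intros h.
  - rewrite Rmin_left; [reflexivity | apply hle; lra].
  - rewrite Rmin_right; [reflexivity | apply hle; lra].
Qed.

Definition cos_max (Q A B C : pt) : R :=
  Rmax (cosine A Q B) (Rmax (cosine B Q C) (cosine C Q A)).

Definition all_cos_lt (Q A B C : pt) (K : R) : Prop :=
  cosine A Q B < K /\ cosine B Q C < K /\ cosine C Q A < K.

Lemma cos_max_bound Q A B C : not_ABC Q A B C -> -1 <= cos_max Q A B C <= 1.
Proof.
  intros [hA [hB hC]].
  pose proof (cosine_bound A Q B (not_eq_sym hA) (not_eq_sym hB)).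
  pose proof (cosine_bound B Q C (not_eq_sym hB) (not_eq_sym hC)).
  pose proof (cosine_bound C Q A (not_eq_sym hC) (not_eq_sym hA)).
  unfold cos_max. repeat apply Rmax_case; assumption.
Qed.

Lemma cos_max_cases Q A B C :
  cos_max Q A B C = cosine A Q B \/ cos_max Q A B C = cosine B Q C \/
  cos_max Q A B C = cosine C Q A.
Proof. unfold cos_max. repeat apply Rmax_case; auto. Qed.

Lemma cos_le_cos_max Q A B C :
  cosine A Q B <= cos_max Q A B C /\ cosine B Q C <= cos_max Q A B C /\
  cosine C Q A <= cos_max Q A B C.
Proof.
  unfold cos_max. pose proof (Rmax_l (cosine B Q C) (cosine C Q A)).
  pose proof (Rmax_r (cosine B Q C) (cosine C Q A)).
  pose proof (Rmax_l (cosine A Q B) (Rmax (cosine B Q C) (cosine C Q A))).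
  pose proof (Rmax_r (cosine A Q B) (Rmax (cosine B Q C) (cosine C Q A))).
  repeat split; lra.
Qed.

Lemma min_angle_acos_cos_max Q A B C :
  not_ABC Q A B C -> min_angle Q A B C = acos (cos_max Q A B C).
Proof.
  intros [hA [hB hC]].
  pose proof (cosine_bound A Q B (not_eq_sym hA) (not_eq_sym hB)).
  pose proof (cosine_bound B Q C (not_eq_sym hB) (not_eq_sym hC)).
  pose proof (cosine_bound C Q A (not_eq_sym hC) (not_eq_sym hA)).
  unfold min_angle, cos_max. rewrite !angle_acos_cosine, !acos_Rmax;
    [reflexivity | assumption .. | apply Rmax_case; assumption].
Qed.

Lemma min_angle_lt_of_all_cos_lt Q Q' A B C :
  not_ABC Q A B C -> not_ABC Q' A B C -> all_cos_lt Q' A B C (cos_max Q A B C) ->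
  min_angle Q A B C < min_angle Q' A B C.
Proof.
  intros hQ hQ' [h1 [h2 h3]].
  rewrite !min_angle_acos_cos_max by assumption.
  apply acos_decreasing.
  - apply cos_max_bound, hQ'.
  - unfold cos_max at 1. repeat apply Rmax_lub_lt; assumption.
  - apply cos_max_bound, hQ.
Qed.

Definition shift (Q v : pt) (t : R) : pt := (fst Q + t * fst v, snd Q + t * snd v).

Lemma shift_0 Q v : shift Q v 0 = Q.
Proof. destruct Q. unfold shift; simpl. f_equal; ring. Qed.

Definition near0 (F : R -> Prop) : Prop :=
  exists d, 0 < d /\ forall t, 0 < t < d -> F t.

Lemma near0_and (F G : R -> Prop) :
  near0 F -> near0 G -> near0 (fun t => F t /\ G t).
Proof.
  intros [d1 [h1 H1]] [d2 [h2 H2]]. exists (Rmin d1 d2). split.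
  - apply Rmin_pos; assumption.
  - intros t ht. pose proof (Rmin_l d1 d2). pose proof (Rmin_r d1 d2).
    split; [apply H1 | apply H2]; lra.
Qed.

Lemma near0_witness (F : R -> Prop) : near0 F -> exists t, F t.
Proof. intros [d [hd H]]. exists (d / 2). apply H. lra. Qed.

Lemma near0_lt f b : continuity_pt f 0 -> f 0 < b -> near0 (fun t => f t < b).
Proof.
  intros hf hb. destruct (hf (b - f 0)) as [d [hd H]]; [lra|].
  exists d. split; [exact hd|]. intros t ht.
  assert (hdist : R_dist (f t) (f 0) < b - f 0).
  { apply H. split; [split; [exact I | lra]|].
    simpl. unfold R_dist. rewrite Rabs_right; lra. }
  unfold R_dist in hdist. apply Rabs_def2 in hdist. lra.
Qed.

Lemma near0_gt f b : continuity_pt f 0 -> b < f 0 -> near0 (fun t => b < f t).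
Proof.
  intros hf hb. destruct (near0_lt (fun t => - f t) (- b)) as [d [hd H]].
  - apply continuity_pt_opp, hf.
  - lra.
  - exists d. split; [exact hd|]. intros t ht. specialize (H t ht). simpl in H. lra.
Qed.

Lemma continuity_pdist_shift X Q v : continuity_pt (fun t => pdist X (shift Q v t)) 0.
Proof.
  unfold pdist, shift; simpl. reg.
  pose proof (pow2_ge_0 (fst X - (fst Q + 0 * fst v))).
  pose proof (pow2_ge_0 (snd X - (snd Q + 0 * snd v))). lra.
Qed.

Lemma continuity_cosine_shift X Y Q v :
  X <> Q -> Y <> Q -> continuity_pt (fun t => cosine X (shift Q v t) Y) 0.
Proof.
  intros HX HY. pose proof (pdist_pos X Q HX). pose proof (pdist_pos Y Q HY).
  unfold cosine, inner. apply continuity_pt_div.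
  - unfold shift; simpl; reg.
  - apply continuity_pt_mult; apply continuity_pdist_shift.
  - rewrite shift_0. nra.
Qed.

Lemma near0_in_disk P Q v r :
  pdist P Q < r -> near0 (fun t => pdist P (shift Q v t) <= r).
Proof.
  intros hr. destruct (near0_lt _ r (continuity_pdist_shift P Q v)) as [d [hd H]].
  - rewrite shift_0. exact hr.
  - exists d. split; [exact hd|]. intros t ht. left. apply H, ht.
Qed.

Lemma near0_neq Q v X : Q <> X -> near0 (fun t => shift Q v t <> X).
Proof.
  intros hQ. destruct (near0_gt _ 0 (continuity_pdist_shift X Q v)) as [d [hd H]].
  - rewrite shift_0. apply pdist_pos, not_eq_sym, hQ.
  - exists d. split; [exact hd|]. intros t ht E. specialize (H t ht). rewrite E in H.
    unfold pdist in H. rewrite !Rminus_diag in H.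
    replace (0 ^ 2 + 0 ^ 2) with 0 in H by ring. rewrite sqrt_0 in H. lra.
Qed.

Lemma near0_not_ABC Q v A B C :
  not_ABC Q A B C -> near0 (fun t => not_ABC (shift Q v t) A B C).
Proof.
  intros [hA [hB hC]].
  apply near0_and; [|apply near0_and]; apply near0_neq; assumption.
Qed.

Lemma near0_cosine_lt X Y Q v K :
  X <> Q -> Y <> Q -> cosine X Q Y < K -> near0 (fun t => cosine X (shift Q v t) Y < K).
Proof.
  intros HX HY hK. apply near0_lt; [apply continuity_cosine_shift; assumption|].
  rewrite shift_0. exact hK.
Qed.

Definition exists_better (P : pt) (r : R) (A B C : pt) (K : R) : Prop :=
  exists Q', pdist P Q' <= r /\ not_ABC Q' A B C /\ all_cos_lt Q' A B C K.

Lemma exists_better_rotate P r A B C K :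
  exists_better P r B C A K -> exists_better P r A B C K.
Proof.
  intros [Q' [hin [[hB [hC hA]] [h1 [h2 h3]]]]].
  exists Q'. repeat split; assumption.
Qed.

Lemma exists_better_along P r Q v A B C K :
  pdist P Q < r -> not_ABC Q A B C ->
  near0 (fun t => all_cos_lt (shift Q v t) A B C K) -> exists_better P r A B C K.
Proof.
  intros hr hQ hcos.
  destruct (near0_witness _ (near0_and _ _ (near0_in_disk P Q v r hr)
    (near0_and _ _ (near0_not_ABC Q v A B C hQ) hcos))) as [t [h1 [h2 h3]]].
  exists (shift Q v t). split; [|split]; assumption.
Qed.

Definition toward (Q X : pt) : pt := (fst X - fst Q, snd X - snd Q).

(* A step of relative length t from Q toward X multiplies the cross product by 1 - t,
   but the inner product only after subtracting t |QX|^2: the angle YQX opens. *)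
Lemma cosine_shift_toward_lt Y Q X t :
  X <> Q -> cross Y Q X <> 0 -> 0 < t < 1 ->
  cosine Y (shift Q (toward Q X) t) X < cosine Y Q X.
Proof.
  intros HX hc ht. rewrite !cosine_dir_cos.
  replace (inner Y (shift Q (toward Q X) t) X)
    with ((1 - t) * (inner Y Q X - t * dist2 X Q))
    by (unfold inner, shift, toward, dist2; simpl; ring).
  replace (cross Y (shift Q (toward Q X) t) X) with ((1 - t) * cross Y Q X)
    by (unfold cross, shift, toward; simpl; ring).
  rewrite dir_cos_scale by lra.
  apply dir_cos_increasing; [exact hc|]. pose proof (dist2_pos X Q HX). nra.
Qed.

Lemma near0_cosine_toward Y Q X K :
  Y <> Q -> X <> Q -> -1 < K < 1 -> cosine Y Q X <= K ->
  near0 (fun t => cosine Y (shift Q (toward Q X) t) X < K).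
Proof.
  intros HY HX hK hle. destruct (Rle_lt_or_eq_dec _ _ hle) as [hlt|heq].
  - apply near0_cosine_lt; assumption.
  - exists 1. split; [lra|]. intros t ht. rewrite <- heq.
    apply cosine_shift_toward_lt; [exact HX| |exact ht].
    apply cosine_strict_bound; [exact HY | exact HX | lra].
Qed.

Lemma exists_better_toward P r Q A B C K :
  pdist P Q < r -> not_ABC Q A B C -> K < 1 ->
  cosine A Q B < K -> cosine B Q C <= K -> cosine C Q A <= K ->
  exists_better P r A B C K.
Proof.
  intros hr hQ hK hAB hBC hCA. pose proof hQ as [hA [hB hC]].
  apply (exists_better_along P r Q (toward Q C)); [exact hr | exact hQ|].
  pose proof (cosine_bound A Q B (not_eq_sym hA) (not_eq_sym hB)).
  rewrite cosine_sym in hCA.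
  assert (HCA := near0_cosine_toward A Q C K (not_eq_sym hA) (not_eq_sym hC)
    ltac:(lra) hCA).
  assert (HBC := near0_cosine_toward B Q C K (not_eq_sym hB) (not_eq_sym hC)
    ltac:(lra) hBC).
  assert (HAB := near0_cosine_lt A B Q (toward Q C) K (not_eq_sym hA) (not_eq_sym hB) hAB).
  destruct (near0_and _ _ HAB (near0_and _ _ HBC HCA)) as [d [hd Hd]].
  exists d. split; [exact hd|]. intros t ht. destruct (Hd t ht) as [h1 [h2 h3]].
  rewrite cosine_sym in h3. repeat split; assumption.
Qed.

Lemma cross_eq0_of_cosine_eq1 X Q Y :
  X <> Q -> Y <> Q -> cosine X Q Y = 1 -> cross X Q Y = 0.
Proof.
  intros HX HY h1. destruct (Req_dec (cross X Q Y) 0) as [h|h]; [exact h|].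
  apply (cosine_strict_bound X Q Y HX HY) in h. lra.
Qed.

Lemma cross_collinear_trans A B C Q :
  B <> Q -> cross A Q B = 0 -> cross B Q C = 0 -> cross A Q C = 0.
Proof.
  intros HB h1 h2. pose proof (dist2_pos B Q HB).
  assert (E : cross A Q C ^ 2 * dist2 B Q =
    (cross A Q B * (fst C - fst Q) + cross B Q C * (fst A - fst Q)) ^ 2 +
    (cross A Q B * (snd C - snd Q) + cross B Q C * (snd A - snd Q)) ^ 2)
    by (unfold cross, dist2; ring).
  rewrite h1, h2 in E.
  assert (E0 : cross A Q C ^ 2 * dist2 B Q = 0) by (rewrite E; ring).
  destruct (Req_dec (cross A Q C) 0) as [h|h]; [exact h | exfalso].
  apply Rmult_integral in E0 as [E0|E0]; [exact (pow_nonzero _ 2 h E0) | lra].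
Qed.

Definition perp (Q X : pt) : pt := (- (snd X - snd Q), fst X - fst Q).

Lemma cross_shift_perp S T Q X t :
  cross S (shift Q (perp Q X) t) T =
  cross S Q T - t * ((fst S - fst T) * (fst X - fst Q) + (snd S - snd T) * (snd X - snd Q)).
Proof. unfold cross, shift, perp; simpl; ring. Qed.

Lemma inner_diff_neq0_of_collinear S T Q X :
  S <> T -> X <> Q -> cross S Q X = 0 -> cross T Q X = 0 ->
  (fst S - fst T) * (fst X - fst Q) + (snd S - snd T) * (snd X - snd Q) <> 0.
Proof.
  intros hST HX hS hT E. pose proof (dist2_pos S T hST). pose proof (dist2_pos X Q HX).
  assert (L : ((fst S - fst T) * (fst X - fst Q) + (snd S - snd T) * (snd X - snd Q)) ^ 2
              + (cross S Q X - cross T Q X) ^ 2 = dist2 S T * dist2 X Q)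
    by (unfold cross, dist2; ring).
  rewrite E, hS, hT in L. nra.
Qed.

(* Moving Q perpendicularly to the line QX pulls Q off that line, so any two distinct
   points S, T on it stop being seen from Q in the same direction. *)
Lemma near0_cosine_perp S T Q X :
  S <> T -> S <> Q -> T <> Q -> X <> Q -> cross S Q X = 0 ->
  (cosine S Q T = 1 -> cross T Q X = 0) ->
  near0 (fun t => cosine S (shift Q (perp Q X) t) T < 1).
Proof.
  intros hST HS HT HX hS hT.
  pose proof (cosine_bound S Q T HS HT) as [_ hle].
  destruct (Rle_lt_or_eq_dec _ _ hle) as [hlt|heq].
  - apply near0_cosine_lt; assumption.
  - specialize (hT heq).
    assert (hST0 : cross S Q T = 0).
    { apply (cross_collinear_trans S X T Q HX hS). rewrite cross_anti, hT. ring. }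
    pose proof (inner_diff_neq0_of_collinear S T Q X hST HX hS hT) as hd.
    destruct (near0_and _ _ (near0_neq Q (perp Q X) S (not_eq_sym HS))
      (near0_neq Q (perp Q X) T (not_eq_sym HT))) as [d [hd0 Hd]].
    exists d. split; [exact hd0|]. intros t ht. destruct (Hd t ht) as [hS' hT'].
    enough (-1 < cosine S (shift Q (perp Q X) t) T < 1) by lra.
    apply cosine_strict_bound; [auto | auto |].
    rewrite cross_shift_perp, hST0. intro E.
    apply hd. apply (Rmult_eq_reg_l t); [lra | lra].
Qed.

Lemma exists_better_perp P r Q A B C :
  pdist P Q < r -> not_ABC Q A B C -> A <> B -> B <> C -> C <> A ->
  cosine A Q B = 1 -> exists_better P r A B C 1.
Proof.
  intros hr hQ hAB hBC hCA h1. pose proof hQ as [hA [hB hC]].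
  apply not_eq_sym in hA, hB, hC.
  assert (hBA : cross B Q A = 0)
    by (rewrite cross_anti, (cross_eq0_of_cosine_eq1 A Q B hA hB h1); ring).
  assert (hAA : cross A Q A = 0) by (unfold cross; ring).
  apply (exists_better_along P r Q (perp Q A)); [exact hr | exact hQ|].
  assert (HAB := near0_cosine_perp A B Q A hAB hA hB hA hAA (fun _ => hBA)).
  assert (HBC : near0 (fun t => cosine B (shift Q (perp Q A) t) C < 1)).
  { apply near0_cosine_perp; try assumption. intros hc.
    apply (cross_collinear_trans C B A Q hB); [|exact hBA].
    rewrite cross_anti, (cross_eq0_of_cosine_eq1 B Q C hB hC hc). ring. }
  assert (HAC : near0 (fun t => cosine A (shift Q (perp Q A) t) C < 1)).
  { apply near0_cosine_perp; auto. intros hc.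
    rewrite cross_anti, (cross_eq0_of_cosine_eq1 A Q C hA hC hc). ring. }
  destruct (near0_and _ _ HAB (near0_and _ _ HBC HAC)) as [d [hd Hd]].
  exists d. split; [exact hd|]. intros t ht. destruct (Hd t ht) as [h1' [h2' h3']].
  rewrite cosine_sym in h3'. repeat split; assumption.
Qed.

Lemma three_unit_vectors_equal_inner u1 u2 v1 v2 w1 w2 k :
  u1 ^ 2 + u2 ^ 2 = 1 -> v1 ^ 2 + v2 ^ 2 = 1 -> w1 ^ 2 + w2 ^ 2 = 1 ->
  u1 * v1 + u2 * v2 = k -> v1 * w1 + v2 * w2 = k -> w1 * u1 + w2 * u2 = k -> k < 1 ->
  u1 * v2 - u2 * v1 <> 0 /\ v1 * w2 - v2 * w1 = u1 * v2 - u2 * v1 /\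
  w1 * u2 - w2 * u1 = u1 * v2 - u2 * v1.
Proof.
  intros hu hv hw huv hvw hwu hk.
  (* The Gram determinant of three plane vectors vanishes: (1 - k)^2 (1 + 2 k) = 0. *)
  assert (G : (u1^2 + u2^2) * ((v1^2 + v2^2) * (w1^2 + w2^2) - (v1*w1 + v2*w2)^2)
    - (u1*v1 + u2*v2) * ((u1*v1 + u2*v2) * (w1^2 + w2^2) - (v1*w1 + v2*w2) * (w1*u1 + w2*u2))
    + (w1*u1 + w2*u2) * ((u1*v1 + u2*v2) * (v1*w1 + v2*w2) - (v1^2 + v2^2) * (w1*u1 + w2*u2))
    = 0) by ring.
  rewrite hu, hv, hw, huv, hvw, hwu in G.
  assert (hk2 : 1 + 2 * k = 0) by (assert (0 < (1 - k) ^ 2) by (apply pow_lt; lra); nra).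
  assert (hsum : (u1 + v1 + w1) ^ 2 + (u2 + v2 + w2) ^ 2 = 0) by nra.
  pose proof (pow2_ge_0 (u1 + v1 + w1)). pose proof (pow2_ge_0 (u2 + v2 + w2)).
  assert (hw1 : w1 = - u1 - v1) by nra.
  assert (hw2 : w2 = - u2 - v2) by nra.
  subst w1 w2. split; [|split; ring].
  intros E. assert (L : (u1 * v1 + u2 * v2) ^ 2 + (u1 * v2 - u2 * v1) ^ 2
    = (u1 ^ 2 + u2 ^ 2) * (v1 ^ 2 + v2 ^ 2)) by ring.
  rewrite huv, E, hu, hv in L. nra.
Qed.

Definition unit_vec (Q X : pt) : pt :=
  ((fst X - fst Q) / pdist X Q, (snd X - snd Q) / pdist X Q).

Lemma unit_vec_norm Q X : X <> Q -> fst (unit_vec Q X) ^ 2 + snd (unit_vec Q X) ^ 2 = 1.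
Proof.
  intros HX. pose proof (pdist_pos X Q HX).
  transitivity (dist2 X Q / pdist X Q ^ 2); [unfold unit_vec, dist2; simpl; field; lra|].
  rewrite <- pdist_sqr. field. lra.
Qed.

Lemma cosine_unit_vec X Q Y : X <> Q -> Y <> Q ->
  cosine X Q Y = fst (unit_vec Q X) * fst (unit_vec Q Y) + snd (unit_vec Q X) * snd (unit_vec Q Y).
Proof.
  intros HX HY. pose proof (pdist_pos X Q HX). pose proof (pdist_pos Y Q HY).
  unfold cosine, inner, unit_vec; simpl. field. lra.
Qed.

Lemma cross_unit_vec X Q Y : X <> Q -> Y <> Q ->
  cross X Q Y = pdist X Q * pdist Y Q *
    (fst (unit_vec Q X) * snd (unit_vec Q Y) - snd (unit_vec Q X) * fst (unit_vec Q Y)).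
Proof.
  intros HX HY. pose proof (pdist_pos X Q HX). pose proof (pdist_pos Y Q HY).
  unfold cross, unit_vec; simpl. field. lra.
Qed.

Lemma equal_cosines_cross Q A B C k :
  not_ABC Q A B C -> cosine A Q B = k -> cosine B Q C = k -> cosine C Q A = k -> k < 1 ->
  exists s, s <> 0 /\ cross A Q B = pdist A Q * pdist B Q * s /\
    cross B Q C = pdist B Q * pdist C Q * s /\ cross C Q A = pdist C Q * pdist A Q * s.
Proof.
  intros [hA [hB hC]] hAB hBC hCA hk. apply not_eq_sym in hA, hB, hC.
  rewrite cosine_unit_vec in hAB, hBC, hCA by assumption.
  destruct (three_unit_vectors_equal_inner _ _ _ _ _ _ k (unit_vec_norm Q A hA)
    (unit_vec_norm Q B hB) (unit_vec_norm Q C hC) hAB hBC hCA hk) as [hs [h1 h2]].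
  eexists. split; [exact hs|].
  rewrite !cross_unit_vec, h1, h2 by assumption. repeat split.
Qed.

Lemma ccw_angle_pos Q X Y : 0 < cross X Q Y -> ccw_angle Q X Y = angle X Q Y.
Proof.
  intros h. unfold ccw_angle; cbv zeta.
  destruct Rle_dec; [reflexivity | unfold cross in h; lra].
Qed.

Lemma ccw_angle_neg Q X Y : cross X Q Y < 0 -> ccw_angle Q X Y = 2 * PI - angle X Q Y.
Proof.
  intros h. unfold ccw_angle; cbv zeta.
  destruct Rle_dec; [unfold cross in h; lra | reflexivity].
Qed.

Lemma consecutive_angles_all_equal Q A B C m :
  0 < m < PI -> angle A Q B = m -> angle B Q C = m -> angle C Q A = m ->
  (0 < cross A Q B /\ 0 < cross B Q C /\ 0 < cross C Q A) \/
  (cross A Q B < 0 /\ cross B Q C < 0 /\ cross C Q A < 0) ->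
  consecutive_angles Q A B C = (m, m, m).
Proof.
  intros hm hAB hBC hCA hsign. rewrite angle_sym in hCA.
  assert (hCB : angle C Q B = m) by (rewrite angle_sym; exact hBC).
  pose proof (cross_anti A Q C). pose proof (cross_anti C Q B).
  unfold consecutive_angles.
  destruct hsign as [[h1 [h2 h3]] | [h1 [h2 h3]]].
  - rewrite (ccw_angle_pos Q A B), (ccw_angle_pos Q B C), (ccw_angle_neg Q A C),
      (ccw_angle_neg Q C B) by lra.
    rewrite hAB, hBC, hCA, hCB.
    destruct Rle_dec; [replace (2 * PI - (2 * PI - m)) with m by ring; reflexivity | lra].
  - rewrite (ccw_angle_neg Q A B), (ccw_angle_neg Q B C), (ccw_angle_pos Q A C),
      (ccw_angle_pos Q C B) by lra.
    rewrite hAB, hBC, hCA, hCB.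
    destruct Rle_dec; [lra | replace (2 * PI - (2 * PI - m)) with m by ring; reflexivity].
Qed.

Lemma not_two_smallest_of_equal_cosines Q A B C k :
  not_ABC Q A B C -> cosine A Q B = k -> cosine B Q C = k -> cosine C Q A = k -> k < 1 ->
  ~ exactly_two_smallest (consecutive_angles Q A B C).
Proof.
  intros hQ hAB hBC hCA hk.
  destruct (equal_cosines_cross Q A B C k hQ hAB hBC hCA hk) as [s [hs [c1 [c2 c3]]]].
  destruct hQ as [hA [hB hC]]. apply not_eq_sym in hA, hB, hC.
  pose proof (pdist_pos A Q hA). pose proof (pdist_pos B Q hB). pose proof (pdist_pos C Q hC).
  assert (hk1 : -1 < k).
  { rewrite <- hAB. apply cosine_strict_bound; [exact hA | exact hB |].
    rewrite c1. apply Rmult_integral_contrapositive. split; [|exact hs]. nra. }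
  rewrite (consecutive_angles_all_equal Q A B C (acos k)).
  - simpl. lra.
  - apply acos_bound_lt. lra.
  - rewrite angle_acos_cosine, hAB. reflexivity.
  - rewrite angle_acos_cosine, hBC. reflexivity.
  - rewrite angle_acos_cosine, hCA. reflexivity.
  - assert (0 < pdist A Q * pdist B Q) by nra. assert (0 < pdist B Q * pdist C Q) by nra.
    assert (0 < pdist C Q * pdist A Q) by nra.
    rewrite c1, c2, c3. destruct (Rdichotomy s 0 hs) as [h|h]; [right | left];
      repeat split; nra.
Qed.

Lemma exists_better_interior P r Q A B C :
  pdist P Q < r -> A <> B -> B <> C -> C <> A -> not_ABC Q A B C ->
  exactly_two_smallest (consecutive_angles Q A B C) ->
  exists_better P r A B C (cos_max Q A B C).
Proof.
  intros hr hAB hBC hCA hQ htwo. pose proof hQ as [hA [hB hC]].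
  assert (hQ1 : not_ABC Q B C A) by (repeat split; assumption).
  assert (hQ2 : not_ABC Q C A B) by (repeat split; assumption).
  pose proof (cos_max_bound Q A B C hQ) as [_ hK].
  pose proof (cos_max_cases Q A B C) as hcases.
  destruct (cos_le_cos_max Q A B C) as [h1 [h2 h3]].
  set (K := cos_max Q A B C) in *.
  destruct (Rle_lt_or_eq_dec _ _ hK) as [hlt|heq].
  - destruct (Rlt_le_dec (cosine A Q B) K) as [l1|l1];
      [|destruct (Rlt_le_dec (cosine B Q C) K) as [l2|l2];
      [|destruct (Rlt_le_dec (cosine C Q A) K) as [l3|l3]]].
    + apply (exists_better_toward P r Q); assumption.
    + apply exists_better_rotate, (exists_better_toward P r Q); assumption.
    + apply exists_better_rotate, exists_better_rotate, (exists_better_toward P r Q);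
        assumption.
    + exfalso. apply (not_two_smallest_of_equal_cosines Q A B C K); auto; lra.
  - rewrite heq in hcases |- *. destruct hcases as [e|[e|e]].
    + apply (exists_better_perp P r Q); auto.
    + apply exists_better_rotate, (exists_better_perp P r Q); auto.
    + apply exists_better_rotate, exists_better_rotate, (exists_better_perp P r Q); auto.
Qed.

Theorem lemma1 (P A B C Pstar : pt) (r : R) :
  0 < r ->
  A <> B -> B <> C -> C <> A ->
  max_min_angle_solution P A B C r Pstar ->
  exactly_two_smallest (consecutive_angles Pstar A B C) ->
  pdist P Pstar = r.
Proof.
  intros _ hAB hBC hCA [hin [hQ hopt]] htwo.
  destruct (Rle_lt_or_eq_dec _ _ hin) as [hlt|heq]; [exfalso | exact heq].
  destruct (exists_better_interior P r Pstar A B C hlt hAB hBC hCA hQ htwo)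
    as [Q' [hQ'in [hQ' hcos]]].
  pose proof (hopt Q' hQ'in hQ').
  pose proof (min_angle_lt_of_all_cos_lt Pstar Q' A B C hQ hQ' hcos).
  lra.
Qed.
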